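(* For every general S4K-frame $\mathfrak F$ and every $\mathcal L_{\multimap}$-formula $\varphi$: $\mathfrak F\Vdash t(\varphi)$ if and only if $\hat\rho\mathfrak F\Vdash\varphi$.
   Context: $\mathcal L_{\multimap}$: atoms, $\top,\bot,\wedge,\vee,\to,\multimap$. $\mathcal L_{i,m}$: classical bimodal language with boxes $\Box_i,\Box_m$. The translation $t:\mathcal L_{\multimap}\to\mathcal L_{i,m}$: $t(p)=\Box_ip$, $t(\top)=\top$, $t(\bot)=\bot$, $t(\varphi\wedge\psi)=\Box_i(t\varphi\wedge t\psi)$, $t(\varphi\vee\psi)=\Box_i(t\varphi\vee t\psi)$, $t(\varphi\to\psi)=\Box_i(t\varphi\to t\psi)$, $t(\varphi\multimap\psi)=\Box_i\Box_m(t\varphi\to t\psi)$. General S4K-frame $(X,R_i,R_m,P)$: $R_i$ preorder, $R_m$ binary relation, $P$ Boolean subalgebra of $\mathcal P(X)$ closed under $[i]a=\{x\mid\forall y(xR_iy\Rightarrow y\in a)\}$ and $[m]a$ (likewise); $\mathfrak F\Vdash\chi$ means $\chi$ is true at all points under all valuations into $P$ (standard Kripke clauses). For such $\mathfrak F$: $xR_m^*z$ iff $\exists y(xR_iy\wedge yR_mz)$; $x\sim y$ iff $xR_iy\wedge yR_ix$; $[x]$ its class, $[X]$ the classes; $[x][R_i][y]$ iff $xR_iy$; $[x][R_m^*][y]$ iff $xR_m^*y'$ for some $y'\sim y$; $\hat\rho P:=\{\{[x]\mid x\in[i]b\}\mid b\in P\}$; $\hat\rho\mathfrak F:=([X],[R_i],[R_m^*],\hat\rho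 P)$, a general $\multimap$-frame. For a general $\multimap$-frame $(Y,\preceq,\sqsubset,Q)$ (here $Q$ is a family of $\preceq$-upsets closed under the relevant operations), $\Vdash\varphi$ means: under every valuation into $Q$ the truth set of $\varphi$ is $Y$, where $\to$ is interpreted by $a\Rightarrow b=\{x\mid\forall y(x\preceq y,y\in a\Rightarrow y\in b)\}$ and $\multimap$ by $a\Rrightarrow b=\{x\mid\forall y(x\sqsubset y,y\in a\Rightarrow y\in b)\}$, $\wedge,\vee$ by $\cap,\cup$. *)

From Stdlib Require Import Arith.
Set Implicit Arguments.

Definition set (X : Type) := X -> Prop.

Inductive iform : Type :=
| IVar : nat -> iform
| ITop : iform
| IBot : iform
| IAnd : iform -> iform -> iform
| IOr  : iform -> iform -> iform
| IImp : iform -> iform -> iform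
| ILol : iform -> iform -> iform.

(* L_{i,m}: classical bimodal language (negation = imp _ bot) *)
Inductive mform : Type :=
| MVar : nat -> mform
| MTop : mform
| MBot : mform
| MAnd : mform -> mform -> mform
| MOr  : mform -> mform -> mform
| MImp : mform -> mform -> mform
| MBoxi : mform -> mform
| MBoxm : mform -> mform.

Fixpoint tr (phi : iform) : mform :=
  match phi with
  | IVar p => MBoxi (MVar p)
  | ITop => MTop
  | IBot => MBot
  | IAnd a b => MBoxi (MAnd (tr a) (tr b))
  | IOr a b => MBoxi (MOr (tr a) (tr b))
  | IImp a b => MBoxi (MImp (tr a) (tr b))
  | ILol a b => MBoxi (MBoxm (MImp (tr a) (tr b)))
  end.

Definition box (X : Type) (R : X -> X -> Prop) (a : set X) : set X :=
  fun x => forall y, R x y -> a y.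

Record S4Kframe := {
  carrier : Type;
  Ri : carrier -> carrier -> Prop;
  Rm : carrier -> carrier -> Prop;
  Pset : set carrier -> Prop;
  Ri_refl : forall x, Ri x x;
  Ri_trans : forall x y z, Ri x y -> Ri y z -> Ri x z;
  P_empty : Pset (fun _ => False);
  P_full : Pset (fun _ => True);
  P_compl : forall a, Pset a -> Pset (fun x => ~ a x);
  P_inter : forall a b, Pset a -> Pset b -> Pset (fun x => a x /\ b x);
  P_union : forall a b, Pset a -> Pset b -> Pset (fun x => a x \/ b x);
  P_boxi : forall a, Pset a -> Pset (box Ri a);
  P_boxm : forall a, Pset a -> Pset (box Rm a)
}.

Fixpoint mtruth (F : S4Kframe) (V : nat -> set (carrier F)) (chi : mform)
  : set (carrier F) :=
  match chi with
  | MVar p => V p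
  | MTop => fun _ => True
  | MBot => fun _ => False
  | MAnd a b => fun x => mtruth F V a x /\ mtruth F V b x
  | MOr a b => fun x => mtruth F V a x \/ mtruth F V b x
  | MImp a b => fun x => mtruth F V a x -> mtruth F V b x
  | MBoxi a => box (@Ri F) (mtruth F V a)
  | MBoxm a => box (@Rm F) (mtruth F V a)
  end.

Definition mvalid (F : S4Kframe) (chi : mform) : Prop :=
  forall V : nat -> set (carrier F), (forall p, Pset F (V p)) ->
    forall x, mtruth F V chi x.

Record LFrame := {
  Lcarrier : Type;
  Lle : Lcarrier -> Lcarrier -> Prop;
  Lsq : Lcarrier -> Lcarrier -> Prop;
  Lset : set Lcarrier -> Prop
}.

Fixpoint itruth (G : LFrame) (V : nat -> set (Lcarrier G)) (phi : iform)
  : set (Lcarrier G) :=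
  match phi with
  | IVar p => V p
  | ITop => fun _ => True
  | IBot => fun _ => False
  | IAnd a b => fun x => itruth G V a x /\ itruth G V b x
  | IOr a b => fun x => itruth G V a x \/ itruth G V b x
  | IImp a b => fun x => forall y, Lle G x y -> itruth G V a y -> itruth G V b y
  | ILol a b => fun x => forall y, Lsq G x y -> itruth G V a y -> itruth G V b y
  end.

Definition ivalid (G : LFrame) (phi : iform) : Prop :=
  forall V : nat -> set (Lcarrier G), (forall p, Lset G (V p)) ->
    forall y, itruth G V phi y.

Section RhoHat.
Variable F : S4Kframe.
Let X := carrier F.

Definition equivi (x y : X) : Prop := Ri F x y /\ Ri F y x.
Definition cls (x : X) : set X := fun y => equivi x y.

Definition classes : Type := { c : set X | exists x, c = cls x }.

Definition Rmstar (x z : X) : Prop := exists y, Ri F x y /\ Rm F y z.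

Definition cRi (c d : classes) : Prop :=
  exists x y, proj1_sig c = cls x /\ proj1_sig d = cls y /\ Ri F x y.

Definition cRmstar (c d : classes) : Prop :=
  exists x y y', proj1_sig c = cls x /\ proj1_sig d = cls y /\
    equivi y' y /\ Rmstar x y'.

Definition rhoP (A : set classes) : Prop :=
  exists b, Pset F b /\
    forall c, A c <-> exists x, proj1_sig c = cls x /\ box (Ri F) b x.

Definition rho_hat : LFrame :=
  {| Lcarrier := classes; Lle := cRi; Lsq := cRmstar; Lset := rhoP |}.
End RhoHat.

From Stdlib Require Import FunctionalExtensionality PropExtensionality IndefiniteDescription.

(* A valuation V into P induces the
   valuation [lift V] of the classes, [lift V p] = {[x] | x in [i](V p)}, which
   takes values in rho-hat P; conversely, by choice, every valuation into
   rho-hat P is (pointwise equivalent to) such a lift.  The core is a truth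
   lemma: for every formula phi, t(phi) holds at x under V iff phi holds at
   the class [x] under [lift V].  It is proved by induction on phi, using that
   truth sets of translations are R_i-upsets (so the outer box_i of t can be
   dropped at x), that [x][R_i][y] iff x R_i y, and that [x][R_m*]d iff d is
   the class of some R_m*-successor of x.  Both directions of the theorem then
   follow by transporting valuations along [lift]. *)

Section RhoHatTruth.
Variable F : S4Kframe.

Lemma cls_self (x : carrier F) : cls F x x.
Proof. split; apply Ri_refl. Qed.

Lemma cls_inj (x y : carrier F) : cls F x = cls F y -> equivi F x y.
Proof. intro E. pose proof (cls_self y) as H. rewrite <- E in H. exact H. Qed.

Lemma cls_equiv (x y : carrier F) : equivi F x y -> cls F x = cls F y.
Proof.
  intros [Rxy Ryx]. apply functional_extensionality; intro z.
  apply propositional_extensionality; split; intros [R1 R2]; split;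
    eauto using Ri_trans.
Qed.

Definition class_of (x : carrier F) : classes F :=
  exist (fun s => exists y, s = cls F y) (cls F x) (ex_intro _ x eq_refl).

Lemma cRi_repr (c d : classes F) (x y : carrier F) :
  proj1_sig c = cls F x -> proj1_sig d = cls F y ->
  cRi c d <-> Ri F x y.
Proof.
  intros Hc Hd; split.
  - intros [x' [y' [Ex [Ey R]]]].
    destruct (cls_inj x x') as [Rxx' _]; [congruence |].
    destruct (cls_inj y y') as [_ Ry'y]; [congruence |].
    eauto using Ri_trans.
  - intro R. exists x, y; auto.
Qed.

Lemma cRmstar_repr (c d : classes F) (x : carrier F) :
  proj1_sig c = cls F x ->
  cRmstar c d <-> exists z w, Ri F x z /\ Rm F z w /\ proj1_sig d = cls F w.
Proof.
  intro Hc; split.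
  - intros [x' [y [y' [Ex [Ey [Eqv [z [R1 R2]]]]]]]].
    destruct (cls_inj x x') as [Rxx' _]; [congruence |].
    exists z, y'; repeat split; eauto using Ri_trans.
    rewrite Ey. symmetry. apply cls_equiv, Eqv.
  - intros [z [w [R1 [R2 Ew]]]].
    exists x, w, w; repeat split; auto using Ri_refl.
    exists z; auto.
Qed.

(* Truth sets of translated formulas are R_i-upsets: t(phi) is boxed or constant. *)
Lemma tr_persistent (V : nat -> set (carrier F)) (phi : iform) (x y : carrier F) :
  Ri F x y -> mtruth F V (tr phi) x -> mtruth F V (tr phi) y.
Proof.
  destruct phi; simpl; auto; intros Rxy H z Ryz; apply H; eauto using Ri_trans.
Qed.

Definition lift (V : nat -> set (carrier F)) (p : nat) : set (classes F) :=
  fun c => exists x, proj1_sig c = cls F x /\ box (Ri F) (V p) x.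

Lemma lift_admissible (V : nat -> set (carrier F)) (p : nat) :
  Pset F (V p) -> rhoP (lift V p).
Proof. intro HV. exists (V p). split; [exact HV | intro c; reflexivity]. Qed.

Lemma admissible_is_lift (U : nat -> set (classes F)) :
  (forall p, rhoP (U p)) ->
  exists V, (forall p, Pset F (V p)) /\ (forall p c, U p c <-> lift V p c).
Proof.
  intro HU. destruct (functional_choice _ HU) as [V HV].
  exists V; split; intro p; apply HV.
Qed.

Lemma truth_lemma (V : nat -> set (carrier F)) (U : nat -> set (classes F))
  (HU : forall p c, U p c <-> lift V p c) (phi : iform) :
  forall (c : classes F) (x : carrier F), proj1_sig c = cls F x ->
    (mtruth F V (tr phi) x <-> itruth (rho_hat F) U phi c).
Proof.
  induction phi as [p | | | a IHa b IHb | a IHa b IHb | a IHa b IHb | a IHa b IHb];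
    intros c x Hc; simpl.
  - rewrite HU; split.
    + intro H. exists x; auto.
    + intros [x' [E H]] y Rxy.
      destruct (cls_inj x' x) as [Rx'x _]; [congruence |].
      eauto using Ri_trans.
  - tauto.
  - tauto.
  - rewrite <- (IHa c x Hc), <- (IHb c x Hc); split.
    + intro H. apply H, Ri_refl.
    + intros [A B] y R; eauto using tr_persistent.
  - rewrite <- (IHa c x Hc), <- (IHb c x Hc); split.
    + intro H. apply H, Ri_refl.
    + intros [A | B] y R; [left | right]; eauto using tr_persistent.
  - split.
    + intros H d Rcd Ha.
      destruct (proj2_sig d) as [y Hd].
      apply (cRi_repr c d x y Hc Hd) in Rcd.
      apply (IHb d y Hd), H; [exact Rcd | apply (IHa d y Hd), Ha].
    + intros H y Rxy Ha.
      apply (IHb (class_of y) y eq_refl), H.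
      * apply (cRi_repr c (class_of y) x y Hc eq_refl), Rxy.
      * apply (IHa (class_of y) y eq_refl), Ha.
  - split.
    + intros H d Rcd Ha.
      destruct (proj1 (cRmstar_repr c d x Hc) Rcd) as [z [w [R1 [R2 Hd]]]].
      apply (IHb d w Hd), (H z R1 w R2), (IHa d w Hd), Ha.
    + intros H z Rxz w Rzw Aw.
      apply (IHb (class_of w) w eq_refl), H.
      * apply (cRmstar_repr c (class_of w) x Hc). exists z, w; auto.
      * apply (IHa (class_of w) w eq_refl), Aw.
Qed.

End RhoHatTruth.

Theorem lemma4p11 : forall (F : S4Kframe) (phi : iform),
  mvalid F (tr phi) <-> ivalid (rho_hat F) phi.
Proof.
  intros F phi; split.
  - intros Hvalid U HU c.
    destruct (admissible_is_lift F U HU) as [V [HV HUV]].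
    destruct (proj2_sig c) as [x Hx].
    apply (truth_lemma F V U HUV phi c x Hx), Hvalid, HV.
  - intros Hvalid V HV x.
    apply (truth_lemma F V (lift F V) (fun p c => iff_refl _) phi (class_of F x) x eq_refl).
    apply Hvalid. intro p. apply lift_admissible, HV.
Qed.
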